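(* Let $g(x;\theta)$ be a family of densities in the class $\mathcal{G}$ with $g(x;0)=\alpha x^{-\alpha-1}$, and let $h(x)=\frac{\partial}{\partial\theta}g(x;\theta)\big|_{\theta=0}$. Suppose the Kullback–Leibler information $$K(\theta)=\inf_{\lambda>0}\int_1^\infty \ln\frac{g(x;\theta)}{\lambda x^{-\lambda-1}}\,g(x;\theta)\,dx$$ is well defined. Then, as $\theta\to0$, $$2K(\theta)=\theta^2\left(\int_1^\infty \frac{x^{\alpha+1}}{\alpha}h^2(x)\,dx-\left(\int_1^\infty \alpha h(x)\ln x\,dx\right)^2\right)+o(\theta^2).$$
   Context: $\mathcal{G}$ is a class of families of densities $g(x;\theta)$ on $[1,\infty)$, $\theta$ in a neighbourhood of $0$, with $g(x;0)$ a Pareto density $\alpha x^{-\alpha-1}$ ($\alpha>0$), such that differentiation in $\theta$ under the integral sign is permitted in all integrals appearing. *)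

From HB Require Import structures.
From mathcomp Require Import all_boot all_order all_algebra.
From mathcomp Require Import all_classical all_reals all_analysis.
Set Implicit Arguments. Unset Strict Implicit. Unset Printing Implicit Defensive.
Import Order.TTheory GRing.Theory Num.Theory.
Import numFieldNormedType.Exports.
Local Open Scope classical_set_scope.
Local Open Scope ring_scope.

Definition Dom (R : realType) : set R := `[1%R, +oo[%classic.

Definition integ1 (R : realType) (f : R -> R) : Prop :=
  (@lebesgue_measure R).-integrable (@Dom R) (EFin \o f).

Definition int1 (R : realType) (f : R -> R) : R :=
  Rintegral (@lebesgue_measure R) (@Dom R) f.

Definition dth (R : realType) (F : R -> R -> R) : R -> R -> R :=
  fun x t => derive1 (F x) t.
Definition d2th (R : realType) (F : R -> R -> R) : R -> R -> R :=
  fun x t => derive1 (dth F x) t.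

Definition diff_under_int (R : realType) (eps : R) (F : R -> R -> R) : Prop :=
  forall t : R, `|t| < eps ->
    [/\ forall x, 1 <= x -> derivable (F x) t 1 /\ derivable (dth F x) t 1,
        integ1 (fun x => F x t),
        integ1 (fun x => dth F x t),
        integ1 (fun x => d2th F x t)
      & is_derive t 1 (fun s => int1 (fun x => F x s)) (int1 (fun x => dth F x t))
        /\ is_derive t 1 (fun s => int1 (fun x => dth F x s)) (int1 (fun x => d2th F x t))].

(* The class G: families of densities g(x;theta) on [1,oo), theta near 0,
   with g(x;0) = alpha x^(-alpha-1), for which differentiation in theta under
   the integral sign is permitted in the integrals appearing (those of g,
   g ln g and g ln x, the constituents of the KL integrand). *)
Definition classG (R : realType) (alpha : R) (g : R -> R -> R) : Prop :=
  0 < alpha /\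
  (forall x : R, 1 <= x -> g x 0 = alpha * x `^ (- alpha - 1)) /\
  exists2 eps : R, 0 < eps &
    [/\ forall t : R, `|t| < eps ->
          (forall x : R, 1 <= x -> 0 < g x t) /\
          integ1 (fun x => g x t) /\ int1 (fun x => g x t) = 1,
        diff_under_int eps g,
        diff_under_int eps (fun x t => g x t * ln (g x t))
      & diff_under_int eps (fun x t => g x t * ln x)].

Definition KLintegrand (R : realType) (g : R -> R -> R) (t lam : R) : R -> R :=
  fun x => ln (g x t / (lam * x `^ (- lam - 1))) * g x t.

Definition KL (R : realType) (g : R -> R -> R) (t : R) : \bar R :=
  ereal_inf [set (\int[@lebesgue_measure R]_(x in @Dom R) (KLintegrand g t lam x)%:E)%E
            | lam in `]0%R, +oo[%classic].

From HB Require Import structures.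
From mathcomp Require Import all_boot all_order all_algebra.
From mathcomp Require Import all_classical all_reals all_analysis.
From mathcomp Require Import ring lra.
Set Implicit Arguments. Unset Strict Implicit. Unset Printing Implicit Defensive.
Import Order.TTheory GRing.Theory Num.Theory.
Import numFieldNormedType.Exports.
Local Open Scope classical_set_scope.
Local Open Scope ring_scope.

(* For fixed theta the KL integrand splits as g ln g - (ln lambda) g + (lambda + 1) g ln x,
   so with m = int g ln x the infimum over lambda of - ln lambda + (lambda + 1) m is
   attained at lambda = 1/m, and K(theta) = int g ln g + ln m + 1 + m.  At theta = 0 the
   Pareto density gives m = 1/alpha and K = 0.  Differentiating under the integral sign,
   K'(0) = 0 because the total mass is constant, and K''(0) is the stated constant, the
   factor x^(alpha+1)/alpha being 1/g(x;0).  A second-order Taylor bound, obtained from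
   the mean value theorem, concludes. *)

Section IntegralsOnDom.
Context {R : realType}.
Implicit Types f g : R -> R.

Lemma mem_Dom (x : R) : (x \in @Dom R) = (1 <= x).
Proof. by apply/idP/idP; rewrite /Dom in_setE /= in_itv /= andbT. Qed.

Lemma measurable_Dom : measurable (@Dom R).
Proof. exact: (@measurable_itv R `[1, +oo[%R). Qed.

Lemma eq_integ1 f g : (forall x, 1 <= x -> f x = g x) -> integ1 f -> integ1 g.
Proof.
move=> fg; apply: eq_integrable; first exact: measurable_Dom.
by move=> x; rewrite mem_Dom => x1 /=; rewrite fg.
Qed.

Lemma eq_int1 f g : (forall x, 1 <= x -> f x = g x) -> int1 f = int1 g.
Proof. by move=> fg; apply: eq_Rintegral => x; rewrite mem_Dom => /fg ->. Qed.

Lemma integ1D f g : integ1 f -> integ1 g -> integ1 (fun x => f x + g x).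
Proof. by move=> If Ig; have := integrableD _ If Ig; apply; exact: measurable_Dom. Qed.

Lemma integ1Z (k : R) f : integ1 f -> integ1 (fun x => k * f x).
Proof. by move=> If; have := integrableZl _ k If; apply; exact: measurable_Dom. Qed.

Lemma integ1B f g : integ1 f -> integ1 g -> integ1 (fun x => f x - g x).
Proof.
move=> If Ig; apply: eq_integ1 (integ1D If (integ1Z (-1) Ig)) => x _.
by rewrite mulN1r.
Qed.

Lemma int1D f g : integ1 f -> integ1 g -> int1 (fun x => f x + g x) = int1 f + int1 g.
Proof. by move=> If Ig; rewrite /int1 RintegralD //; exact: measurable_Dom. Qed.

Lemma int1Z (k : R) f : integ1 f -> int1 (fun x => k * f x) = k * int1 f.
Proof. by move=> If; rewrite /int1 RintegralZl //; exact: measurable_Dom. Qed.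

Lemma integral_Dom_EFin f : integ1 f ->
  (\int[lebesgue_measure]_(x in @Dom R) (f x)%:E)%E = (int1 f)%:E.
Proof.
move=> If; rewrite /int1 /Rintegral fineK //.
by have := integrable_fin_num _ If; apply; exact: measurable_Dom.
Qed.

Lemma int1_ge0 f : (forall x, 1 <= x -> 0 <= f x) -> 0 <= int1 f.
Proof. by move=> f0; apply: Rintegral_ge0 => x; rewrite /Dom /= in_itv /= andbT; exact: f0. Qed.

End IntegralsOnDom.

Section ParetoLogMoment.
Context {R : realType}.

Lemma cvg_powRN_pinfty (b : R) : 0 < b -> x `^ (- b) @[x --> +oo] --> 0.
Proof.
move=> b0; apply/cvgrPdist_le => e e0.
have M0 : 0 < e `^ (- b^-1) by rewrite powR_gt0.
near=> x.
have xM : e `^ (- b^-1) <= x by near: x; apply: nbhs_pinfty_ge; rewrite num_real.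
have x0 : 0 < x by exact: lt_le_trans xM.
rewrite sub0r normrN ger0_norm ?powR_ge0// powRN.
have : (e `^ (- b^-1)) `^ b <= x `^ b.
  by rewrite (ge0_ler_powR (ltW b0)) ?nnegrE ?ltW.
rewrite -powRrM mulNr mulVf ?gt_eqF// powRN powRr1 ?(ltW e0)// => H.
by rewrite invf_ple ?posrE ?powR_gt0.
Unshelve. all: by end_near.
Qed.

Lemma ln_le_powR (b x : R) : 0 < b -> 0 < x -> b * ln x <= x `^ b.
Proof.
move=> b0 x0; rewrite -ln_powR.
have xb : -1 < x `^ b - 1 by have := powR_gt0 b x0; lra.
by have := le_ln1Dx xb; rewrite [1 + _]addrC subrK => H; lra.
Qed.

Lemma cvg_powRN_ln_pinfty (b : R) : 0 < b -> x `^ (- b) * ln x @[x --> +oo] --> 0.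
Proof.
move=> b0; have b20 : 0 < b / 2 by rewrite divr_gt0.
apply: (@squeeze_cvgr _ _ _ _ (fun=> 0) (fun x => 2 / b * x `^ (- (b / 2)))).
- near=> x.
  have x1 : 1 <= x by near: x; apply: nbhs_pinfty_ge; rewrite num_real.
  have x0 : 0 < x by exact: lt_le_trans x1.
  apply/andP; split; first by rewrite mulr_ge0 ?powR_ge0 ?ln_ge0.
  have -> : x `^ (- (b / 2)) = x `^ (- b) * x `^ (b / 2).
    by rewrite -powRD ?(gt_eqF x0) ?implybT //; congr (_ `^ _); field.
  have -> : x `^ (- b) * ln x = 2 / b * (x `^ (- b) * (b / 2 * ln x)).
    by field; rewrite gt_eqF.
  apply: ler_wpM2l; first by rewrite divr_ge0 ?ltW.
  by apply: ler_wpM2l; [exact: powR_ge0 | exact: ln_le_powR].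
- exact: cvg_cst.
- rewrite -(mulr0 (2 / b)); apply: cvgMl_tmp; exact: cvg_powRN_pinfty.
Unshelve. all: by end_near.
Qed.

Lemma continuous_powR (b x : R) : 0 < x -> {for x, continuous (fun y : R => y `^ b)}.
Proof.
move=> x0; apply: differentiable_continuous; apply/derivable1_diffP.
by apply: derivable_powR; rewrite in_itv /= x0.
Qed.

Lemma is_derive_pareto_ln_primitive (a x : R) : 0 < a -> 0 < x ->
  is_derive x 1 (fun y : R => - (y `^ (- a) * (ln y + a^-1)))
    (a * x `^ (- a - 1) * ln x).
Proof.
move=> a0 x0.
have Dpow := is_derive1_powR (- a) x0.
have Dln := is_derive1_ln x0.
have Dln_a : is_derive x 1 (fun y : R => ln y + a^-1) x^-1.
  by rewrite -[x^-1]addr0; apply: is_deriveD.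
(* [is_derive] is a class: [is_derive_eq] finds [Dprim] by instance resolution. *)
have Dprim := is_deriveN (is_deriveM Dpow Dln_a).
apply: is_derive_eq.
have -> : x `^ (- a - 1) = x `^ (- a) * x^-1.
  by rewrite powRD ?powR_inv1 ?(ltW x0)// (gt_eqF x0) implybT.
by rewrite /GRing.scale /=; field; rewrite (gt_eqF x0) (gt_eqF a0).
Qed.

Lemma int1_pareto_ln (a : R) : 0 < a -> int1 (fun x => a * x `^ (- a - 1) * ln x) = a^-1.
Proof.
move=> a0; rewrite /int1 /Dom.
pose F y := - (y `^ (- a) * (ln y + a^-1)).
have dF (x : R) : 0 < x -> is_derive x 1 F (a * x `^ (- a - 1) * ln x).
  exact: is_derive_pareto_ln_primitive.
rewrite (@Rintegral_ge0_continuous_FTC2y R _ F 1 0).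
- by rewrite /F powR1 ln1 add0r mul1r opprK add0r.
- by move=> x x1; rewrite mulr_ge0 ?ln_ge0 ?mulr_ge0 ?powR_ge0 ?(ltW a0).
- apply: (@continuous_in_subspaceT R R) => x; rewrite inE /= in_itv /= andbT => x1.
  have x0 : 0 < x by exact: lt_le_trans x1.
  apply: cvgM; last exact: continuous_ln.
  by apply: cvgM; [exact: cvg_cst | exact: continuous_powR].
- have F0 : (fun y => - (y `^ (- a) * ln y) - a^-1 * y `^ (- a)) @ +oo
      --> (- 0 - a^-1 * 0 : R).
    apply: cvgB; first by apply: cvgN; exact: cvg_powRN_ln_pinfty.
    by apply: cvgMl_tmp; exact: cvg_powRN_pinfty.
  rewrite oppr0 mulr0 subr0 in F0.
  suff -> : F = (fun y => - (y `^ (- a) * ln y) - a^-1 * y `^ (- a)) by [].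
  by apply/funext => y; rewrite /F; ring.
- by move=> x x1; exact: (@ex_derive _ _ _ _ _ _ _ (dF x (lt_trans ltr01 x1))).
- apply: cvg_at_right_filter; apply: differentiable_continuous; apply/derivable1_diffP.
  exact: (@ex_derive _ _ _ _ _ _ _ (dF 1 ltr01)).
- move=> x; rewrite in_itv /= andbT => x1; rewrite derive1E.
  exact: (@derive_val _ _ _ _ _ _ _ (dF x (lt_trans ltr01 x1))).
Qed.

End ParetoLogMoment.

Section SecondOrderTaylor.
Context {R : realType}.

Lemma near_norm_lt (eps t : R) : `|t| < eps -> \forall s \near t, `|s| < eps.
Proof.
move=> te; apply/nbhs_normP; exists (eps - `|t|); first by rewrite /= subr_gt0.
move=> s /= hs.
have := ler_normD t (s - t); rewrite addrC subrK => hs2.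
have : `|s - t| = `|t - s| by rewrite distrC.
lra.
Qed.

Lemma is_derive_near_cst (G : R -> R) (t c d : R) :
  (\forall s \near t, G s = c) -> is_derive t 1 G d -> d = 0.
Proof.
move=> Gc D; rewrite -(@derive_val _ _ _ _ _ _ _ D).
by rewrite (near_eq_derive _ (g := fun=> c)) ?derive_cst.
Qed.

Lemma derive1_mul_ln (u : R -> R) (t : R) : derivable u t 1 -> 0 < u t ->
  derive1 (fun s => u s * ln (u s)) t = derive1 u t * (ln (u t) + 1).
Proof.
move=> du u0.
have Du : is_derive t 1 u (derive1 u t) by rewrite derive1E; exact: derivableP.
have DM := is_deriveM Du (is_derive1_comp (is_derive1_ln u0) Du).
rewrite derive1E (@derive_val _ _ _ _ _ _ _ DM) /GRing.scale /=.
by field; rewrite gt_eqF.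
Qed.

Lemma derive2_mul_ln (u : R -> R) (t : R) :
  (\forall s \near t, derivable u s 1 /\ 0 < u s) -> derivable (derive1 u) t 1 ->
  derive1 (fun s => derive1 (fun s => u s * ln (u s)) s) t =
  derive1 (derive1 u) t * (ln (u t) + 1) + derive1 u t ^+ 2 / u t.
Proof.
move=> Hu d2; have [du u0] := nbhs_singleton Hu.
rewrite derive1E (near_eq_derive _ (g := fun s => derive1 u s * (ln (u s) + 1))); last first.
  by apply: filterS Hu => s [ds us]; exact: derive1_mul_ln.
have Du : is_derive t 1 u (derive1 u t) by rewrite derive1E; exact: derivableP.
have D2 : is_derive t 1 (derive1 u) (derive1 (derive1 u) t).
  by rewrite derive1E; exact: derivableP.
have Dl := is_derive1_comp (is_derive1_ln u0) Du.
have DM := is_deriveM D2 (is_deriveD Dl (is_derive_cst (1 : R) t 1)).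
have -> : (fun s => derive1 u s * (ln (u s) + 1)) = derive1 u * ((@ln R) \o u + cst 1) by [].
rewrite (@derive_val _ _ _ _ _ _ _ DM) /GRing.scale /=.
change (((@ln R) \o u + cst 1) t) with (ln (u t) + 1).
by field; rewrite gt_eqF.
Qed.

Lemma derive2_mulr (u : R -> R) (c t : R) :
  (\forall s \near t, derivable u s 1) -> derivable (derive1 u) t 1 ->
  derive1 (fun s => derive1 (fun s => u s * c) s) t = derive1 (derive1 u) t * c.
Proof.
move=> Hu d2.
rewrite derive1E (near_eq_derive _ (g := fun s => derive1 u s * c)); last first.
  by apply: filterS Hu => s; exact: derive1Mr.
by rewrite -derive1E derive1Mr.
Qed.

Lemma is_derive_approx (f : R -> R) (x c e : R) : 0 < e -> is_derive x 1 f c ->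
  exists2 d, 0 < d & forall h, `|h| < d -> `|f (x + h) - f x - c * h| <= e * `|h|.
Proof.
move=> e0 D.
have H : (fun h : R => h^-1 *: ((f \o shift x) (h *: 1) - f x)) @ 0^' --> 'D_1 f x.
  exact: (@ex_derive _ _ _ _ _ _ _ D).
rewrite (@derive_val _ _ _ _ _ _ _ D) in H.
move/cvgrPdist_le: H => /(_ e e0).
rewrite near_withinE => /nbhs_normP [d /= d0 Hd].
exists d => // h hd.
have [->|h0] := eqVneq h 0.
  by rewrite addr0 normr0 mulr0 subrr mulr0 subr0 normr0.
have := Hd h; rewrite /= sub0r normrN => /(_ hd h0).
rewrite /shift /= /GRing.scale /= mulr1 [h + x]addrC => H.
have -> : f (x + h) - f x - c * h = - (h * (c - h^-1 * (f (x + h) - f x))) by field.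
by rewrite normrN normrM mulrC ler_wpM2r.
Qed.

Lemma MVT_segment_norm_le (f df : R -> R) (a b M : R) : a <= b ->
  (forall s : R, a <= s <= b -> is_derive s 1 f (df s)) ->
  (forall s : R, a <= s <= b -> `|df s| <= M) ->
  `|f b - f a| <= M * (b - a).
Proof.
move=> ab Df dfM.
have [c] : exists2 c, c \in `[a, b]%R & f b - f a = df c * (b - a).
  apply: MVT_segment => // [x|].
  - by rewrite in_itv /= => /andP[ax xb]; apply: Df; rewrite !ltW.
  - apply: derivable_within_continuous => x; rewrite in_itv /= => xab.
    exact: (@ex_derive _ _ _ _ _ _ _ (Df x xab)).
rewrite in_itv /= => /dfM cM ->.
by rewrite normrM [`|b - a|]ger0_norm ?subr_ge0 // ler_wpM2r ?subr_ge0.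
Qed.

Lemma MVT_norm_le (f df : R -> R) (r t M : R) : `|t| < r ->
  (forall s : R, `|s| < r -> is_derive s 1 f (df s)) ->
  (forall s : R, `|s| <= `|t| -> `|df s| <= M) ->
  `|f t - f 0| <= M * `|t|.
Proof.
move=> tr Df dfM; have [t0|t0] := leP 0 t.
- rewrite ger0_norm // in tr dfM *.
  rewrite -[t in M * t]subr0; apply: MVT_segment_norm_le => // s /andP[s0 st].
  + by apply: Df; rewrite ger0_norm //; lra.
  + by apply: dfM; rewrite ger0_norm //; lra.
- rewrite ltr0_norm // in tr dfM *.
  rewrite distrC -[- t]sub0r; apply: MVT_segment_norm_le; first exact: ltW.
  + by move=> s /andP[ts s0]; apply: Df; rewrite ler0_norm //; lra.
  + by move=> s /andP[ts s0]; apply: dfM; rewrite ler0_norm //; lra.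
Qed.

Lemma taylor2_le (f df : R -> R) (c r : R) : 0 < r ->
  (forall t : R, `|t| < r -> is_derive t 1 f (df t)) -> f 0 = 0 -> df 0 = 0 ->
  is_derive (0 : R) 1 df c ->
  forall e, 0 < e -> exists2 d, 0 < d &
    forall t, `|t| < d -> `|2 * f t - t ^+ 2 * c| <= e * t ^+ 2.
Proof.
move=> r0 Df f0 df0 D2 e e0.
have e20 : 0 < e / 2 by rewrite divr_gt0.
have [d d0 Hd] := is_derive_approx e20 D2.
exists (Num.min d r); first by rewrite lt_min d0 r0.
move=> t; rewrite lt_min => /andP[td tr].
(* [q' s = df s - c s = o(s)], so the mean value theorem gives [q t = o(t^2)]. *)
pose q s := f s - c / 2 * (s * s).
have Dq (s : R) : `|s| < r -> is_derive s 1 q (df s - c * s).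
  move=> sr; have Dfs := Df s sr.
  have Dsq : is_derive s 1 (fun s : R => c / 2 * (s * s)) (c * s).
    by apply: is_derive_eq; rewrite /GRing.scale /=; field.
  by apply: is_derive_eq; rewrite /GRing.scale /=.
have dq_small (s : R) : `|s| <= `|t| -> `|df s - c * s| <= e / 2 * `|t|.
  move=> st; have := Hd s (le_lt_trans st td); rewrite add0r df0 subr0.
  by move/le_trans; apply; rewrite ler_wpM2l ?(ltW e20).
have := MVT_norm_le tr Dq dq_small.
have -> : q 0 = 0 by rewrite /q f0 !(mulr0, mul0r, subr0).
have -> : 2 * f t - t ^+ 2 * c = 2 * q t by rewrite /q; field.
rewrite subr0 normrM ger0_norm // -real_normK ?num_real //.
set a := `|q t|; set b := `|t|; nra.
Qed.

End SecondOrderTaylor.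

Definition neg_entropy (R : realType) (g : R -> R -> R) (t : R) : R :=
  int1 (fun x => g x t * ln (g x t)).

Definition log_moment (R : realType) (g : R -> R -> R) (t : R) : R :=
  int1 (fun x => g x t * ln x).

(* The infimum defining [KL g t], attained at [lambda = 1 / log_moment g t]. *)
Definition KLmin (R : realType) (g : R -> R -> R) (t : R) : R :=
  neg_entropy g t + ln (log_moment g t) + 1 + log_moment g t.

Definition KLcurvature (R : realType) (a : R) (g : R -> R -> R) : R :=
  int1 (fun x => x `^ (a + 1) / a * dth g x 0 ^+ 2) -
  int1 (fun x => a * dth g x 0 * ln x) ^+ 2.

Section KLClosedForm.
Context {R : realType}.
Variables (g : R -> R -> R) (t : R).
Hypothesis g_gt0 : forall x, 1 <= x -> 0 < g x t.
Hypothesis Ig : integ1 (fun x => g x t).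
Hypothesis Iglng : integ1 (fun x => g x t * ln (g x t)).
Hypothesis Iglnx : integ1 (fun x => g x t * ln x).
Hypothesis g_mass : int1 (fun x => g x t) = 1.

Lemma integral_KLintegrand (lam : R) : 0 < lam -> integ1 (KLintegrand g t lam) ->
  (\int[lebesgue_measure]_(x in @Dom R) (KLintegrand g t lam x)%:E)%E =
  (neg_entropy g t - ln lam * int1 (fun x => g x t) + (lam + 1) * log_moment g t)%:E.
Proof.
move=> lam0 IK; rewrite integral_Dom_EFin //; congr (_%:E).
rewrite (@eq_int1 _ _ (fun x => (g x t * ln (g x t) + (- ln lam) * g x t)
                                 + (lam + 1) * (g x t * ln x))).
  rewrite int1D; last 2 first.
  - by apply: integ1D => //; exact: integ1Z.
  - exact: integ1Z.
  by rewrite int1D ?int1Z ?mulNr //; exact: integ1Z.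
move=> x x1; have x0 : 0 < x by exact: lt_le_trans x1.
rewrite /KLintegrand ln_div ?posrE ?g_gt0 ?mulr_gt0 ?powR_gt0 //.
by rewrite lnM ?posrE ?powR_gt0 // ln_powR; ring.
Qed.

Lemma KL_closed_form : (forall lam, 0 < lam -> integ1 (KLintegrand g t lam)) ->
  KL g t \is a fin_num -> 0 < log_moment g t /\ fine (KL g t) = KLmin g t.
Proof.
move=> IK Kfin.
set A := neg_entropy g t; set m := log_moment g t.
have KLlam (lam : R) : 0 < lam ->
    (\int[lebesgue_measure]_(x in @Dom R) (KLintegrand g t lam x)%:E)%E =
    (A - ln lam + (lam + 1) * m)%:E.
  move=> lam0; rewrite integral_KLintegrand //; last exact: IK.
  by rewrite g_mass mulr1.
have KL_le (lam : R) : 0 < lam -> (KL g t <= (A - ln lam + (lam + 1) * m)%:E)%E.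
  move=> lam0; rewrite -KLlam //; apply: ereal_inf_lbound.
  by exists lam; first rewrite /= in_itv /= andbT.
have m_ge0 : 0 <= m.
  by apply: int1_ge0 => x x1; rewrite mulr_ge0 ?ln_ge0 // ltW // g_gt0.
have m_gt0 : 0 < m.
  (* if [m = 0], the integral at [lambda = exp (A - K + 1)] drops below [K] *)
  rewrite lt_neqAle m_ge0 andbT; apply/negP => /eqP m0.
  set r := fine (KL g t); have Kr : KL g t = r%:E by rewrite /r fineK.
  have := KL_le _ (expR_gt0 (A - r + 1)).
  by rewrite Kr lee_fin expRK -m0 mulr0 addr0; lra.
split => //; suff -> : KL g t = (A + ln m + 1 + m)%:E by [].
apply/le_anti/andP; split.
- have im0 : 0 < m^-1 by rewrite invr_gt0.
  have := KL_le _ im0.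
  rewrite lnV ?posrE // mulrDl mulVf ?gt_eqF // mul1r.
  by move/le_trans; apply; rewrite lee_fin; lra.
- apply: le_ereal_inf_tmp => y [lam]; rewrite /= in_itv /= andbT => lam0 <-.
  rewrite KLlam // lee_fin.
  have lm0 : 0 < lam * m by rewrite mulr_gt0.
  have := @le_ln1Dx _ (lam * m - 1) (ltac:(lra)).
  by rewrite [1 + _]addrC subrK lnM ?posrE //; nra.
Qed.

End KLClosedForm.

Section ClassGExpansion.
Context {R : realType}.
Variables (a eps : R) (g : R -> R -> R).
Hypothesis a_gt0 : 0 < a.
Hypothesis g_pareto : forall x, 1 <= x -> g x 0 = a * x `^ (- a - 1).
Hypothesis eps_gt0 : 0 < eps.
Hypothesis g_density : forall t : R, `|t| < eps ->
  (forall x, 1 <= x -> 0 < g x t) /\ integ1 (fun x => g x t) /\ int1 (fun x => g x t) = 1.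
Hypothesis dg : diff_under_int eps g.
Hypothesis dglng : diff_under_int eps (fun x t => g x t * ln (g x t)).
Hypothesis dglnx : diff_under_int eps (fun x t => g x t * ln x).

Let h x := dth g x 0.
Let h2 x := d2th g x 0.

Let eps0 : `|0 : R| < eps.
Proof. by rewrite normr0. Qed.

Let near0_lt_eps : \forall s \near (0 : R), `|s| < eps.
Proof. exact: near_norm_lt eps0. Qed.

Lemma log_moment_pareto : log_moment g 0 = a^-1.
Proof.
rewrite /log_moment -(int1_pareto_ln a_gt0).
by apply: eq_int1 => x x1; rewrite g_pareto.
Qed.

Lemma ln_g_pareto x : 1 <= x -> ln (g x 0) = ln a + (- a - 1) * ln x.
Proof.
move=> x1; have x0 : 0 < x by exact: lt_le_trans x1.
by rewrite g_pareto // lnM ?posrE ?powR_gt0 // ln_powR.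
Qed.

Lemma neg_entropy_pareto : neg_entropy g 0 = ln a - (a + 1) / a.
Proof.
have [_ [Ig g_mass]] := g_density eps0.
have [_ Iglnx _ _ _] := dglnx eps0.
rewrite /neg_entropy (@eq_int1 _ _ (fun x => ln a * g x 0 + (- a - 1) * (g x 0 * ln x))).
  rewrite int1D; [|exact: integ1Z|exact: integ1Z].
  rewrite !int1Z // g_mass -/(log_moment g 0) log_moment_pareto.
  by field; rewrite gt_eqF.
by move=> x x1; rewrite ln_g_pareto //; ring.
Qed.

Lemma KLmin_pareto : KLmin g 0 = 0.
Proof.
rewrite /KLmin neg_entropy_pareto log_moment_pareto lnV ?posrE ?invr_gt0 //.
by field; rewrite gt_eqF.
Qed.

Lemma int1_dth_g (s : R) : `|s| < eps -> int1 (fun x => dth g x s) = 0.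
Proof.
move=> se; have [_ _ _ _ [Ds _]] := dg se.
apply: (is_derive_near_cst (c := 1) _ Ds).
by apply: filterS (near_norm_lt se) => s' /g_density [_ [_ ->]].
Qed.

Lemma int1_d2th_g0 : int1 h2 = 0.
Proof.
have [_ _ _ _ [_ D2]] := dg eps0.
apply: (is_derive_near_cst (c := 0) _ D2).
by apply: filterS near0_lt_eps => s /int1_dth_g.
Qed.

Lemma dth_glng_pareto x : 1 <= x -> dth (fun x t => g x t * ln (g x t)) x 0 =
  (ln a + 1) * h x + (- (a + 1)) * (h x * ln x).
Proof.
move=> x1; have [Dg0 _ _ _ _] := dg eps0.
rewrite /dth derive1_mul_ln; last 2 first.
- exact: (Dg0 x x1).1.
- exact: (g_density eps0).1.
by rewrite ln_g_pareto // /h /dth; ring.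
Qed.

Lemma dth_glnx_pareto x : 1 <= x -> dth (fun x t => g x t * ln x) x 0 = h x * ln x.
Proof.
move=> x1; have [Dg0 _ _ _ _] := dg eps0.
by rewrite /dth derive1Mr //; exact: (Dg0 x x1).1.
Qed.

Lemma d2th_glng_pareto x : 1 <= x -> d2th (fun x t => g x t * ln (g x t)) x 0 =
  (ln a + 1) * h2 x + (- (a + 1)) * (h2 x * ln x) + x `^ (a + 1) / a * h x ^+ 2.
Proof.
move=> x1; have x0 : 0 < x by exact: lt_le_trans x1.
rewrite /d2th /dth derive2_mul_ln; last 2 first.
- apply: filterS near0_lt_eps => s se; have [Dgs _ _ _ _] := dg se.
  by split; [exact: (Dgs x x1).1 | exact: (g_density se).1].
- by have [Dg0 _ _ _ _] := dg eps0; exact: (Dg0 x x1).2.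
rewrite ln_g_pareto // g_pareto // /h2 /h /d2th /dth.
have -> : x `^ (- a - 1) = (x `^ (a + 1))^-1 by rewrite -powRN opprD.
by field; rewrite ?gt_eqF ?powR_gt0.
Qed.

Lemma d2th_glnx_pareto x : 1 <= x -> d2th (fun x t => g x t * ln x) x 0 = h2 x * ln x.
Proof.
move=> x1; rewrite /d2th /dth derive2_mulr //.
- apply: filterS near0_lt_eps => s se; have [Dgs _ _ _ _] := dg se.
  exact: (Dgs x x1).1.
- by have [Dg0 _ _ _ _] := dg eps0; exact: (Dg0 x x1).2.
Qed.

Let moment_h := int1 (fun x => dth g x 0 * ln x).
Let moment_h2 := int1 (fun x => d2th g x 0 * ln x).
Let chi2_h := int1 (fun x => x `^ (a + 1) / a * dth g x 0 ^+ 2).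
Let dneg_entropy t := int1 (fun x => dth (fun x t => g x t * ln (g x t)) x t).
Let dlog_moment t := int1 (fun x => dth (fun x t => g x t * ln x) x t).
Let d2neg_entropy := int1 (fun x => d2th (fun x t => g x t * ln (g x t)) x 0).
Let d2log_moment := int1 (fun x => d2th (fun x t => g x t * ln x) x 0).
Let dKLmin t := dneg_entropy t + dlog_moment t / log_moment g t + dlog_moment t.

Let integ1_h_ln : integ1 (fun x => h x * ln x).
Proof. by have [_ _ I _ _] := dglnx eps0; exact: eq_integ1 dth_glnx_pareto I. Qed.

Let integ1_h2_ln : integ1 (fun x => h2 x * ln x).
Proof. by have [_ _ _ I _] := dglnx eps0; exact: eq_integ1 d2th_glnx_pareto I. Qed.

Let dlog_moment_pareto : dlog_moment 0 = moment_h.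
Proof. exact: eq_int1 dth_glnx_pareto. Qed.

Let d2log_moment_pareto : d2log_moment = moment_h2.
Proof. exact: eq_int1 d2th_glnx_pareto. Qed.

Lemma dneg_entropy_pareto : dneg_entropy 0 = - (a + 1) * moment_h.
Proof.
have [_ _ Ih _ _] := dg eps0.
have IhL := integ1_h_ln.
rewrite /dneg_entropy (eq_int1 dth_glng_pareto) int1D; [|exact: integ1Z|exact: integ1Z].
by rewrite !int1Z // (int1_dth_g eps0) mulr0 add0r.
Qed.

Lemma d2neg_entropy_pareto : d2neg_entropy = - (a + 1) * moment_h2 + chi2_h.
Proof.
have [_ _ _ Ih2 _] := dg eps0.
have [_ _ _ IA2 _] := dglng eps0.
have Ih2L := integ1_h2_ln.
have Ilin : integ1 (fun x => (ln a + 1) * h2 x + (- (a + 1)) * (h2 x * ln x)).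
  by apply: integ1D; apply: integ1Z; [exact: Ih2 | exact: Ih2L].
have IQ : integ1 (fun x => x `^ (a + 1) / a * h x ^+ 2).
  apply: (eq_integ1 _ (integ1B IA2 Ilin)) => x x1.
  by rewrite d2th_glng_pareto //; ring.
rewrite /d2neg_entropy (eq_int1 d2th_glng_pareto) int1D; [|exact: Ilin|exact: IQ].
rewrite int1D; [|exact: integ1Z Ih2|exact: integ1Z Ih2L].
rewrite (int1Z _ Ih2) (int1Z _ Ih2L) int1_d2th_g0 mulr0 add0r.
reflexivity.
Qed.

Lemma is_derive_KLmin t : `|t| < eps -> 0 < log_moment g t ->
  is_derive t 1 (KLmin g) (dKLmin t).
Proof.
move=> te mt.
have [_ _ _ _ [DA _]] := dglng te.
have [_ _ _ _ [Dm _]] := dglnx te.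
have DA' : is_derive t 1 (neg_entropy g) (dneg_entropy t) := DA.
have Dm' : is_derive t 1 (log_moment g) (dlog_moment t) := Dm.
have Dl := is_derive1_comp (is_derive1_ln mt) Dm'.
have D := is_deriveD (is_deriveD (is_deriveD DA' Dl) (is_derive_cst (1 : R) t 1)) Dm'.
rewrite /KLmin; apply: (is_derive_eq D); rewrite /dKLmin /=.
by field; rewrite gt_eqF.
Qed.

Lemma dKLmin_pareto : dKLmin 0 = 0.
Proof.
rewrite /dKLmin dneg_entropy_pareto dlog_moment_pareto log_moment_pareto.
by field; rewrite gt_eqF.
Qed.

Lemma is_derive_dKLmin_pareto : is_derive (0 : R) 1 dKLmin (KLcurvature a g).
Proof.
have [_ _ _ _ [Dm Dm1]] := dglnx eps0.
have [_ _ _ _ [_ DA1]] := dglng eps0.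
have DA1' : is_derive (0 : R) 1 dneg_entropy d2neg_entropy := DA1.
have Dm1' : is_derive (0 : R) 1 dlog_moment d2log_moment := Dm1.
have Dm' : is_derive (0 : R) 1 (log_moment g) (dlog_moment 0) := Dm.
have m0 : log_moment g 0 != 0 by rewrite log_moment_pareto invr_eq0 gt_eqF.
have D := is_deriveD (is_deriveD DA1' (is_deriveM Dm1' (is_deriveV m0 Dm'))) Dm1'.
rewrite /dKLmin; apply: (is_derive_eq D); rewrite /KLcurvature.
have -> : int1 (fun x => a * dth g x 0 * ln x) = a * moment_h.
  by rewrite -int1Z //; apply: eq_int1 => x _; rewrite mulrA.
rewrite d2neg_entropy_pareto d2log_moment_pareto dlog_moment_pareto log_moment_pareto.
rewrite /GRing.scale /= -/chi2_h.
by field; rewrite gt_eqF.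
Qed.

Lemma log_moment_gt0 : exists2 r, 0 < r & forall t, `|t| < r -> 0 < log_moment g t.
Proof.
have [_ _ _ _ [Dm _]] := dglnx eps0.
have cm : log_moment g x @[x --> 0] --> log_moment g 0.
  apply: differentiable_continuous; apply/derivable1_diffP.
  exact: (@ex_derive _ _ _ _ _ _ _ Dm).
have m0 : 0 < log_moment g 0 by rewrite log_moment_pareto invr_gt0.
move: cm => /cvgr_gt /(_ 0 m0) /nbhs_normP [r /= r0 Hr].
by exists r => // t tr; apply: Hr; rewrite /= sub0r normrN.
Qed.

Lemma KLmin_taylor2 e : 0 < e -> exists2 d, 0 < d & forall t, `|t| < d ->
  `|2 * KLmin g t - t ^+ 2 * KLcurvature a g| <= e * t ^+ 2.
Proof.
move=> e0; have [r r0 m_gt0] := log_moment_gt0.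
have r'0 : 0 < Num.min eps r by rewrite lt_min eps_gt0 r0.
apply: (taylor2_le r'0 _ KLmin_pareto dKLmin_pareto is_derive_dKLmin_pareto e0) => t.
by rewrite lt_min => /andP[te tr]; exact: is_derive_KLmin te (m_gt0 t tr).
Qed.

End ClassGExpansion.

Theorem lemma3 (R : realType) (alpha : R) (g : R -> R -> R) :
  classG alpha g ->
  (exists2 eps : R, 0 < eps &
     forall t : R, `|t| < eps ->
       (forall lam : R, 0 < lam -> integ1 (KLintegrand g t lam)) /\
       KL g t \is a fin_num) ->
  let h := fun x => dth g x 0 in
  let C := int1 (fun x => x `^ (alpha + 1) / alpha * h x ^+ 2)
           - (int1 (fun x => alpha * h x * ln x)) ^+ 2 in
  forall e : R, 0 < e ->
    exists2 delta : R, 0 < delta &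
      forall t : R, `|t| < delta ->
        `|2 * fine (KL g t) - t ^+ 2 * C| <= e * t ^+ 2.
Proof.
move=> [a0 [g_pareto [eps eps0 [g_density dg dglng dglnx]]]] [eps' eps'0 KLfin] h C e e0.
have [d d0 Hd] := KLmin_taylor2 a0 g_pareto eps0 g_density dg dglng dglnx e0.
exists (Num.min d (Num.min eps eps')); first by rewrite !lt_min d0 eps0 eps'0.
move=> t; rewrite !lt_min => /and3P[td te te'].
have [g_gt0 [Ig g_mass]] := g_density t te.
have [_ Iglng _ _ _] := dglng t te.
have [_ Iglnx _ _ _] := dglnx t te.
have [IK Kfin] := KLfin t te'.
have [_ ->] := KL_closed_form g_gt0 Ig Iglng Iglnx g_mass IK Kfin.
exact: Hd.
Qed.
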